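(* Let $r\in\mathfrak{b}$ have pairwise distinct diagonal entries, let $b_{11},\dots,b_{nn}\in\mathbb{C}^*$ and $b=\sum_{\iota}E_{\iota\iota}\operatorname{diag}(b_{11},\dots,b_{nn})L^\iota(r)$. Then for every $s\in\mathfrak{b}^*$ and every $\iota$, $(bsb^{-1})_{\iota\iota}=\operatorname{tr}(L^\iota(r)s)$.
   Context: $\mathfrak{b}$: upper triangular complex $n\times n$ matrices; $\mathfrak{b}^*=\mathfrak{gl}_n/\mathfrak{n}^+$ with $\mathfrak{n}^+$ the strictly upper triangular matrices (diagonal entries of $bsb^{-1}$ and $\operatorname{tr}(L^\iota s)$ are well defined on this quotient since $b$ and $L^\iota$ are upper triangular). $E_{\iota\iota}$ is the matrix unit; $L^\iota(r)=\big[\operatorname{tr}\prod_{k\ne\iota}(r-r_{kk}I)\big]^{-1}\prod_{k\ne\iota}(r-r_{kk}I)$. The matrix $b$ is invertible upper triangular and satisfies $brb^{-1}=\operatorname{diag}(r)$. *)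

From HB Require Import structures.
From mathcomp Require Import all_boot all_order all_algebra.
From mathcomp Require Import complex.
From mathcomp Require Import reals.
Set Implicit Arguments. Unset Strict Implicit. Unset Printing Implicit Defensive.
Import Order.TTheory GRing.Theory Num.Theory.
Local Open Scope ring_scope.

Section Defs.
Variable (F : fieldType) (n : nat).

Definition upper_mx (A : 'M[F]_n) : Prop :=
  forall i j : 'I_n, (j < i)%N -> A i j = 0.

Definition Lnum (r : 'M[F]_n) (iota : 'I_n) : 'M[F]_n :=
  \prod_(k < n | k != iota) (r - (r k k)%:M).

Definition Lmx (r : 'M[F]_n) (iota : 'I_n) : 'M[F]_n :=
  (\tr (Lnum r iota))^-1 *: Lnum r iota.

Definition bmx (r : 'M[F]_n) (d : 'rV[F]_n) : 'M[F]_n :=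
  \sum_(iota < n) (delta_mx iota iota *m diag_mx d *m Lmx r iota).

End Defs.

(* With q_i = prod_{k <> i} (X - r_kk) we have L^i = q_i(r) / q_i(r_ii): the
   diagonal of the triangular q_i(r) is (q_i(r_jj))_j, which vanishes off i.
   By Cayley-Hamilton for the triangular r, (r - r_ii) L^i = 0 and L^i L^j = 0
   for i <> j.  The first identity puts every column of L^i in the kernel of
   r - r_ii, a line since the r_kk are distinct, so L^i = (column i) (row i).
   The second, with L^i_ii = 1, shows that column i of b^-1 is that of L^i
   divided by d_i, while row i of b is d_i times that of L^i.  Hence
   (b s b^-1)_ii = row_i(L^i) s col_i(L^i) = tr (L^i s). *)

From HB Require Import structures.
From mathcomp Require Import all_boot all_order all_algebra.
From mathcomp Require Import complex reals zify.
Import GRing.Theory.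
Set Implicit Arguments. Unset Strict Implicit.
Local Open Scope ring_scope.

Lemma char_poly_trmx (R : comNzRingType) n (A : 'M[R]_n) :
  char_poly A^T = char_poly A.
Proof.
rewrite /char_poly -det_tr /char_poly_mx linearB /= tr_scalar_mx.
by rewrite -map_trmx trmxK.
Qed.

Lemma mxE_mul_row_col (R : nzRingType) m n p (A : 'M[R]_(m, n)) (B : 'M_(n, p)) i j :
  (A *m B) i j = (row i A *m col j B) 0 0.
Proof. by rewrite colE mulmxA -colE -row_mul !mxE. Qed.

Section UpperTriangular.
Variables (F : fieldType) (n : nat).
Implicit Types A B : 'M[F]_n.

Lemma upper_trig_mxT A : upper_mx A -> is_trig_mx A^T.
Proof. by move=> hA; apply/is_trig_mxP => i j lt_ij; rewrite mxE hA. Qed.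

Lemma upper_mx_mul A B : upper_mx A -> upper_mx B -> upper_mx (A *m B).
Proof.
move=> hA hB i j lt_ji; rewrite mxE big1 // => k _.
have [lt_ki | le_ik] := ltnP k i; first by rewrite hA // mul0r.
by rewrite hB ?mulr0 // (leq_trans lt_ji).
Qed.

Lemma upper_mx_mul_diag A B : upper_mx A -> upper_mx B ->
  forall j, (A *m B) j j = A j j * B j j.
Proof.
move=> hA hB j; rewrite mxE (bigD1 j) //= big1 ?addr0 // => k nkj.
have [lt_kj | lt_jk | eq_kj] := ltngtP k j.
- by rewrite hA // mul0r.
- by rewrite hB // mulr0.
- by case/eqP: nkj; apply: val_inj.
Qed.

Lemma upper_mx_kernel A (i : 'I_n) (v : 'cV[F]_n) : upper_mx A ->
    (forall k, k != i -> A k k != 0) -> A *m v = 0 -> v i 0 = 0 -> v = 0.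
Proof.
move=> hA hAkk hAv vi0.
have vk0 (k : 'I_n) : (forall m : 'I_n, (k < m)%N -> v m 0 = 0) -> v k 0 = 0.
  move=> vm0; have [-> // | nki] := eqVneq k i.
  have /eqP := congr1 (fun w : 'cV[F]_n => w k 0) hAv.
  rewrite !mxE (bigD1 k) //= big1 ?addr0 => [|m nmk].
    by rewrite mulf_eq0 (negbTE (hAkk k nki)) => /eqP.
  have [lt_mk | lt_km | eq_mk] := ltngtP m k.
  - by rewrite hA // mul0r.
  - by rewrite vm0 // mulr0.
  - by case/eqP: nmk; apply: val_inj.
suff vt0 t (k : 'I_n) : (n - t <= k)%N -> v k 0 = 0.
  by apply/matrixP => k j; rewrite ord1 mxE (vt0 n) ?subnn.
elim: t k => [|t IHt] k le_k; first by move: (ltn_ord k); lia.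
by apply: vk0 => m lt_km; apply: IHt; lia.
Qed.

End UpperTriangular.

Section HornerUpper.
Variables (F : fieldType) (n : nat) (r : 'M[F]_n.+1).
Hypothesis r_upper : upper_mx r.

Lemma upper_mx_horner p : upper_mx (horner_mx r p).
Proof.
elim/poly_ind: p => [|p c IHp]; first by move=> i j _; rewrite rmorph0 mxE.
rewrite rmorphD rmorphM /= horner_mx_X horner_mx_C -mulmxE => i j lt_ji.
by rewrite mxE upper_mx_mul // mxE add0r -val_eqE /= gtn_eqF // mulr0n.
Qed.

Lemma horner_mx_upper_diag p j : horner_mx r p j j = p.[r j j].
Proof.
elim/poly_ind: p => [|p c IHp]; first by rewrite rmorph0 mxE horner0.
rewrite rmorphD rmorphM /= horner_mx_X horner_mx_C -mulmxE mxE.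
by rewrite (upper_mx_mul_diag (upper_mx_horner p) r_upper) IHp mxE eqxx mulr1n !hornerE.
Qed.

Lemma Cayley_Hamilton_upper : horner_mx r (\prod_k ('X - (r k k)%:P)) = 0.
Proof.
have <- : char_poly r = \prod_k ('X - (r k k)%:P).
  rewrite -char_poly_trmx char_poly_trig ?upper_trig_mxT //.
  by apply: eq_bigr => k _; rewrite mxE.
exact: Cayley_Hamilton.
Qed.

End HornerUpper.

Section Lagrange.
Variables (F : fieldType) (n : nat) (r : 'M[F]_n.+1).

Definition Lpoly (i : 'I_n.+1) : {poly F} :=
  \prod_(k < n.+1 | k != i) ('X - (r k k)%:P).

Lemma Lnum_horner i : Lnum r i = horner_mx r (Lpoly i).
Proof.
rewrite /Lnum /Lpoly rmorph_prod; apply: eq_bigr => k _.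
by rewrite rmorphB /= horner_mx_X horner_mx_C.
Qed.

Lemma Lpoly_root i j : j != i -> (Lpoly i).[r j j] = 0.
Proof. by move=> nji; rewrite horner_prod (bigD1 j) //= !hornerE subrr mul0r. Qed.

Lemma prod_XsubC_diag i : \prod_k ('X - (r k k)%:P) = ('X - (r i i)%:P) * Lpoly i.
Proof. by rewrite (bigD1 i). Qed.

Hypothesis r_upper : upper_mx r.
Hypothesis r_diag_uniq : forall k l : 'I_n.+1, k != l -> r k k != r l l.

Lemma Lpoly_diag_neq0 i : (Lpoly i).[r i i] != 0.
Proof.
rewrite horner_prod; apply/prodf_neq0 => k nki.
by rewrite !hornerE subr_eq0 r_diag_uniq // eq_sym.
Qed.

Lemma mxtrace_Lnum i : \tr (Lnum r i) = (Lpoly i).[r i i].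
Proof.
rewrite /mxtrace (bigD1 i) //= big1 ?addr0 => [|j nji];
  rewrite Lnum_horner (horner_mx_upper_diag r_upper) //.
exact: Lpoly_root.
Qed.

Lemma Lmx_horner i : Lmx r i = ((Lpoly i).[r i i])^-1 *: horner_mx r (Lpoly i).
Proof. by rewrite /Lmx mxtrace_Lnum Lnum_horner. Qed.

Lemma upper_Lmx i : upper_mx (Lmx r i).
Proof. by move=> k j lt_jk; rewrite Lmx_horner mxE (upper_mx_horner r_upper) ?mulr0. Qed.

Lemma Lmx_diag i : Lmx r i i i = 1.
Proof.
by rewrite Lmx_horner mxE (horner_mx_upper_diag r_upper) mulVf ?Lpoly_diag_neq0.
Qed.

Lemma Lmx_annihilated i : (r - (r i i)%:M) *m Lmx r i = 0.
Proof.
have -> : r - (r i i)%:M = horner_mx r ('X - (r i i)%:P).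
  by rewrite rmorphB /= horner_mx_X horner_mx_C.
rewrite Lmx_horner -scalemxAr mulmxE -rmorphM /= -prod_XsubC_diag.
by rewrite (Cayley_Hamilton_upper r_upper) scaler0.
Qed.

Lemma Lmx_orthogonal i j : j != i -> Lmx r i *m Lmx r j = 0.
Proof.
move=> nji; rewrite !Lmx_horner -scalemxAr -scalemxAl mulmxE -rmorphM /=.
rewrite [X in X * Lpoly j]/Lpoly (bigD1 j) //= mulrAC -prod_XsubC_diag.
by rewrite rmorphM /= (Cayley_Hamilton_upper r_upper) mul0r !scaler0.
Qed.

(* Every column of L^i lies in the kernel of r - r_ii, which is a line since
   the diagonal entries are distinct; normalising by L^i_ii = 1 gives rank one. *)
Lemma Lmx_rank1 i : Lmx r i = col i (Lmx r i) *m row i (Lmx r i).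
Proof.
move: (Lmx r i) (Lmx_diag i) (Lmx_annihilated i) => L Lii annihL.
have col_ker j : col j L - L i j *: col i L = 0.
  apply: (upper_mx_kernel (A := r - (r i i)%:M) (i := i)).
  - by move=> a b lt_ba; rewrite !mxE -val_eqE /= gtn_eqF // mulr0n subr0 r_upper.
  - by move=> a nai; rewrite !mxE eqxx mulr1n subr_eq0 r_diag_uniq.
  - by rewrite mulmxBr -scalemxAr !colE !mulmxA annihL !mul0mx scaler0 subrr.
  - by rewrite !mxE Lii mulr1 subrr.
apply/matrixP => k j; rewrite !mxE big_ord1 !mxE.
by move/matrixP/(_ k 0): (col_ker j); rewrite !mxE => /eqP; rewrite subr_eq0 mulrC => /eqP.
Qed.

End Lagrange.

Section Conjugation.
Variables (F : fieldType) (n : nat) (r : 'M[F]_n.+1) (d : 'rV[F]_n.+1).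

Lemma row_delta_mul m (M : 'M[F]_(n.+1, m)) i k :
  row i (delta_mx k k *m M) = row k M *+ (i == k).
Proof. by rewrite !rowE mulmxA mul_delta_mx_cond; case: (i == k); rewrite ?mul0mx. Qed.

Lemma row_bmx i : row i (bmx r d) = d 0 i *: row i (Lmx r i).
Proof.
rewrite linear_sum (bigD1 i) //= big1 ?addr0 => [|k nki]; rewrite -mulmxA row_delta_mul.
  by apply/rowP => c; rewrite eqxx mul_diag_mx !mxE.
by rewrite eq_sym (negbTE nki).
Qed.

Definition bmx_inv : 'M[F]_n.+1 := \matrix_(a, c) (Lmx r c a c / d 0 c).

Lemma col_bmx_inv c : col c bmx_inv = (d 0 c)^-1 *: col c (Lmx r c).
Proof. by apply/colP => a; rewrite !mxE mulrC. Qed.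

Hypothesis r_upper : upper_mx r.
Hypothesis r_diag_uniq : forall k l : 'I_n.+1, k != l -> r k k != r l l.
Hypothesis d_neq0 : forall k, d 0 k != 0.

Lemma mulmx_bmx_inv : bmx r d *m bmx_inv = 1%:M.
Proof.
apply/matrixP => a c.
rewrite mxE_mul_row_col row_bmx col_bmx_inv -scalemxAl -scalemxAr.
rewrite 2!mxE -mxE_mul_row_col; have [<- | nac] := eqVneq a c.
  have La_upper := upper_Lmx r_upper a.
  rewrite (upper_mx_mul_diag La_upper La_upper) (Lmx_diag r_upper r_diag_uniq).
  by rewrite !mulr1 mulfV ?d_neq0 // mxE eqxx.
by rewrite Lmx_orthogonal 1?eq_sym // !mxE (negbTE nac) !mulr0.
Qed.

Lemma invmx_bmx : invmx (bmx r d) = bmx_inv.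
Proof.
have [b_unit _] := mulmx1_unit mulmx_bmx_inv.
by rewrite -[LHS]mulmx1 -mulmx_bmx_inv mulmxA mulVmx // mul1mx.
Qed.

Lemma bmx_conj_diag s i :
  (bmx r d *m s *m invmx (bmx r d)) i i = \tr (Lmx r i *m s).
Proof.
have -> : \tr (Lmx r i *m s) = (row i (Lmx r i) *m s *m col i (Lmx r i)) 0 0.
  by rewrite {1}(Lmx_rank1 r_upper r_diag_uniq i) -mulmxA mxtrace_mulC trace_mx11.
rewrite invmx_bmx mxE_mul_row_col row_mul row_bmx col_bmx_inv.
by rewrite -scalemxAr -!scalemxAl 2!mxE mulKf ?d_neq0.
Qed.

End Conjugation.

Local Open Scope complex_scope.

Theorem mainTheorem17 (R : realType) (n : nat) (r : 'M[R[i]]_n) (d : 'rV[R[i]]_n) :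
  upper_mx r ->
  (forall k l : 'I_n, k != l -> r k k != r l l) ->
  (forall k : 'I_n, d 0 k != 0) ->
  forall (s : 'M[R[i]]_n) (iota : 'I_n),
    (bmx r d *m s *m invmx (bmx r d)) iota iota = \tr (Lmx r iota *m s).
Proof.
case: n r d => [|n] r d r_upper r_diag_uniq d_neq0 s iota; first by case: iota.
exact: bmx_conj_diag.
Qed.
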